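(* Let $n>p>1$, $X\in\mathbb{R}^{n\times p}$ with rows $x_1^T,\dots,x_n^T$, $Y=(y_1,\dots,y_n)^T$, $p\le h<n$, and assume that for every $(\circ_1,\dots,\circ_{n-1})\in\{+,-\}^{n-1}$ the $(n-1)\times p$ matrix with rows $(x_1\circ_kx_{k+1})^T$, $k=1,\dots,n-1$, has rank $p$. Let $l\in\{2,\dots,p\}$, let $i_1,\dots,i_l\in\{1,\dots,n\}$ be pairwise distinct and $\circ_1,\dots,\circ_{l-1}\in\{+,-\}$. If the system of $l-1$ equations $(x_{i_1}\circ_kx_{i_{k+1}})^T\beta=y_{i_1}\circ_ky_{i_{k+1}}$, $k=1,\dots,l-1$, has rank $l-1$, then there exist $i_{l+1}\in\{1,\dots,n\}\setminus\{i_1,\dots,i_l\}$ and $\circ_l\in\{+,-\}$ such that the system of the $l$ equations $(x_{i_1}\circ_kx_{i_{k+1}})^T\beta=y_{i_1}\circ_ky_{i_{k+1}}$, $k=1,\dots,l$, has rank $l$. Moreover, if some solution $\beta$ of the $(l-1)$-equation system satisfies $r^2_{i_1}(\beta)=r^2_{(h)}(\beta)=r^2_{(h+1)}(\beta)$, then $i_{l+1}$ can be chosen so that there exists $\beta_1\in\mathbb{R}^p$ with $r^2_{i_1}(\beta_1)=\dots=r^2_{i_l}(\beta_1)=r^2_{i_{l+1}}(\beta_1)=r^2_{(h)}(\beta_1)=r^2_{(h+1)}(\beta_1)$.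
   Context: $r_i(\beta)=y_i-x_i^T\beta$; $r^2_{(1)}(\beta)\le\dots\le r^2_{(n)}(\beta)$ are the sorted squared residuals. For $\circ\in\{+,-\}$, $a\circ b$ is $a+b$ or $a-b$. The rank of a linear system means the rank of its coefficient matrix. *)

From HB Require Import structures.
From mathcomp Require Import all_boot all_order all_algebra.
From mathcomp Require Import reals.
Set Implicit Arguments. Unset Strict Implicit. Unset Printing Implicit Defensive.
Import Order.TTheory GRing.Theory Num.Theory.
Local Open Scope ring_scope.

Section Defs.
Variables (R : realType) (n p : nat).

(* sign: true = '+', false = '-' ; a \circ b = a + sgn o * b *)
Definition sgn (o : bool) : R := if o then 1 else -1.

(* entry X_{i,c} with a 0-based nat row index (0 outside the range) *)
Definition Xat (X : 'M[R]_(n, p)) (i : nat) (c : 'I_p) : R :=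
  match @insub _ (fun k => k < n)%N 'I_n i with Some i' => X i' c | None => 0 end.

(* the (n-1) x p matrix with rows (x_1 o_k x_{k+1})^T, k = 1..n-1 (0-based: 0 and k+1) *)
Definition chainmx (X : 'M[R]_(n, p)) (o : 'I_n.-1 -> bool) : 'M[R]_(n.-1, p) :=
  \matrix_(k < n.-1, c < p) (Xat X 0 c + sgn (o k) * Xat X k.+1 c).

Definition sysA m (X : 'M[R]_(n, p)) (i1 : 'I_n) (j : 'I_m -> 'I_n)
  (o : 'I_m -> bool) : 'M[R]_(m, p) :=
  \matrix_(k < m, c < p) (X i1 c + sgn (o k) * X (j k) c).

Definition sysb m (Y : 'cV[R]_n) (i1 : 'I_n) (j : 'I_m -> 'I_n)
  (o : 'I_m -> bool) : 'cV[R]_m :=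
  \col_(k < m) (Y i1 0 + sgn (o k) * Y (j k) 0).

Definition sysArow (X : 'M[R]_(n, p)) (i1 j' : 'I_n) (o : bool) : 'rV[R]_p :=
  \row_(c < p) (X i1 c + sgn o * X j' c).

Definition res2 (X : 'M[R]_(n, p)) (Y : 'cV[R]_n) (beta : 'cV[R]_p) (i : 'I_n) : R :=
  ((Y - X *m beta) i 0) ^+ 2.

(* r^2_{(k)}(beta): k-th smallest squared residual, k 1-based *)
Definition res2_ord (X : 'M[R]_(n, p)) (Y : 'cV[R]_n) (beta : 'cV[R]_p) (k : nat) : R :=
  nth 0 (sort (fun a b : R => a <= b) [seq res2 X Y beta i | i <- enum 'I_n]) k.-1.

End Defs.

From HB Require Import structures.
From mathcomp Require Import all_boot all_order all_algebra.
From mathcomp Require Import reals.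
From mathcomp Require Import ring lra zify.
From Stdlib Require Import Classical.
Import Order.TTheory GRing.Theory Num.Theory.
Set Implicit Arguments. Unset Strict Implicit. Unset Printing Implicit Defensive.
Local Open Scope ring_scope.

(* A row x_{i1} -/+ x_i with i outside the current indices raises the rank as soon as it
   is not a combination of the rows of the system; if no such row existed, every row of X
   would be one, contradicting \rank X = p > l - 1.  Dually this gives a direction d in
   the kernel of the system.  Along beta0 + t d the system stays satisfied, so the indexed
   residuals keep |r_i| = |r_{i1}|, while for a fresh index i the difference
   r_i^2 - r_{i1}^2 = (r_i - r_{i1}) (r_i + r_{i1}) is a product of two affine functions
   of t.  Stopping at the first t >= 0 where one of these factors vanishes, no fresh
   squared residual strictly crosses r_{i1}^2, so r_{i1}^2 stays tied with the h-th and
   (h+1)-th order statistics, and the index whose factor vanished joins the tie. *)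

Section OrderStatistics.
Variable R : realDomainType.

Lemma sorted_nth_count (P : pred R) (s : seq R) :
  (forall x y, y <= x -> P x -> P y) -> sorted <=%R s ->
  forall k, (k < size s)%N -> P (nth 0 s k) = (k < count P s)%N.
Proof.
move=> Pdown; elim: s => [//|x s IH] /= xs.
have x_min : all (>= x) s by apply: order_path_min xs; apply: le_trans.
have countP0 : ~~ P x -> count P s = 0%N.
  move=> nPx; apply/eqP; rewrite -leqn0 leqNgt -has_count; apply/hasPn => y ys.
  by apply: contra nPx; apply: Pdown; apply: (allP x_min).
case=> [|k] /= ltks; first by case Px: (P x); rewrite // countP0 ?Px.
case Px: (P x) => /=; first by rewrite IH ?(path_sorted xs).
rewrite countP0 ?Px //; apply: negbTE; apply: contraFN Px.
by apply: Pdown; apply: (allP x_min); apply: mem_nth.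
Qed.

Variable I : finType.

Definition order_stat (f : I -> R) (k : nat) : R :=
  nth 0 (sort <=%R [seq f i | i <- enum I]) k.-1.

Lemma order_stat_tieP (f : I -> R) v h : (0 < h)%N -> (h < #|I|)%N ->
  (order_stat f h = v /\ order_stat f h.+1 = v) <->
  (count (fun i => (f i < v)%R) (enum I) < h)%N /\
  (h < count (fun i => (f i <= v)%R) (enum I))%N.
Proof.
move=> h_gt0 lthI; rewrite /order_stat /=.
set s := sort _ _.
have s_sorted : sorted <=%R s by apply: sort_sorted => a b; apply: le_total.
have size_s : size s = #|I| by rewrite size_sort size_map -cardE.
have count_le : count (fun x => x <= v) s = count (fun i => (f i <= v)%R) (enum I).
  by rewrite count_sort count_map.
have count_lt : count (fun x => x < v) s = count (fun i => (f i < v)%R) (enum I).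
  by rewrite count_sort count_map.
have nth_eq k : (k < #|I|)%N -> nth 0 s k = v <->
    (k < count (fun i => (f i <= v)%R) (enum I))%N /\
    (count (fun i => (f i < v)%R) (enum I) <= k)%N.
  move=> ltkI; rewrite -count_le -count_lt.
  rewrite -(sorted_nth_count (P := fun x => x <= v) _ s_sorted) ?size_s //; last first.
    by move=> x y yx xv; apply: le_trans xv.
  rewrite leqNgt -(sorted_nth_count (P := fun x => x < v) _ s_sorted) ?size_s //; last first.
    by move=> x y yx xv; apply: le_lt_trans xv.
  by rewrite -leNgt; split => [->|/andP/le_anti //]; rewrite lexx.
rewrite !nth_eq //; last by rewrite (leq_ltn_trans (leq_pred h)).
move: (count _ _) (count _ _) => c_le c_lt; lia.
Qed.

Lemma order_stat_tie_transfer (f g : I -> R) m h : (0 < h)%N -> (h < #|I|)%N ->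
  (forall i, f i <= f m -> g i <= g m) -> (forall i, f m <= f i -> g m <= g i) ->
  f m = order_stat f h -> order_stat f h = order_stat f h.+1 ->
  g m = order_stat g h /\ order_stat g h = order_stat g h.+1.
Proof.
move=> h_gt0 lthI fg_le fg_ge f_h f_h1.
have [lt_cnt le_cnt] : (count (fun i => (f i < f m)%R) (enum I) < h)%N /\
    (h < count (fun i => (f i <= f m)%R) (enum I))%N.
  by apply/order_stat_tieP => //; rewrite -f_h1 -f_h.
suff [-> ->] : order_stat g h = g m /\ order_stat g h.+1 = g m by [].
apply/order_stat_tieP => //; split.
  apply: leq_ltn_trans lt_cnt; apply: sub_count => i /=.
  by rewrite !ltNge; apply: contra; apply: fg_ge.
by apply: leq_trans le_cnt _; apply: sub_count => i /=; apply: fg_le.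
Qed.
End OrderStatistics.

Section RankExtension.
Variable F : fieldType.

Lemma mxrank_col_mx_kernel m p (A : 'M[F]_(m, p)) (r : 'rV_p) (d : 'cV_p) :
  A *m d = 0 -> r *m d != 0 -> \rank (col_mx A r) = (\rank A).+1.
Proof.
move=> Ad0 rd_neq0.
have A_sub : (A <= col_mx A r)%MS by rewrite -addsmxE addsmxSl.
apply/eqP; rewrite eqn_leq; apply/andP; split.
  rewrite -addsmxE (leq_trans (mxrank_adds_leqif A r)) //.
  by rewrite -[X in (_ <= X)%N]addn1 leq_add2l rank_leq_row.
rewrite (ltn_leqif (mxrank_leqif_sup A_sub)) col_mx_sub submx_refl /=.
apply: contra rd_neq0 => /submxP [D ->].
by rewrite -mulmxA Ad0 mulmx0.
Qed.

Lemma kernel_vector_notsub m p (A : 'M[F]_(m, p)) (r : 'rV_p) :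
  ~~ (r <= A)%MS -> exists2 d : 'cV_p, A *m d = 0 & r *m d != 0.
Proof.
rewrite submxE => rK_neq0.
have [c rKc_neq0] : exists c, (r *m cokermx A) 0 c != 0.
  apply/existsP; apply: contraR rK_neq0 => /existsPn rK0.
  by apply/eqP/rowP => c; rewrite [RHS]mxE; apply/eqP; move: (rK0 c); rewrite negbK.
exists (cokermx A *m delta_mx c 0); first by rewrite mulmxA mulmx_coker mul0mx.
rewrite mulmxA -colE; apply: contraNneq rKc_neq0 => rKc0.
by move/matrixP/(_ 0 0)/eqP: rKc0; rewrite !mxE.
Qed.

End RankExtension.

Section Crossing.
Variable R : realFieldType.

Lemma sign_change_root (a b t : R) : 0 <= t -> a * (a - t * b) <= 0 -> a - t * b != 0 ->
  [/\ b != 0, 0 <= a / b & a / b < t].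
Proof.
move=> t_ge0 sign_change at_neq0.
have b_neq0 : b != 0.
  by apply: contraNneq at_neq0 => b0; move: sign_change; rewrite b0 mulr0 subr0; nra.
have q_sign : a / b * (a / b - t) <= 0.
  have bb_gt0 : 0 < b * b by rewrite lt_def mulf_neq0 //= -expr2 sqr_ge0.
  rewrite -(pmulr_rle0 _ bb_gt0); move: sign_change; rewrite -{1 2}(divfK b_neq0 a).
  by congr (_ <= 0); ring.
have q_neq_t : a / b != t.
  by apply: contraNneq at_neq0 => <-; rewrite divfK // subrr.
split => //; first nra.
by rewrite lt_neqAle q_neq_t /=; nra.
Qed.

Lemma crossing_mul_sign (a1 a2 c1 c2 : R) :
  c1 = 0 \/ 0 < a1 * c1 -> c2 = 0 \/ 0 < a2 * c2 ->
  (a1 * a2 <= 0 -> c1 * c2 <= 0) /\ (0 <= a1 * a2 -> 0 <= c1 * c2).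
Proof. by case=> [->|s1]; case=> [->|s2]; rewrite ?mul0r ?mulr0; split => //; nra. Qed.

Variables (I : finType) (P : pred I) (a b : I -> R).

Lemma exists_first_crossing x0 : P x0 -> b x0 != 0 -> 0 <= a x0 / b x0 ->
  exists x, [/\ P x, b x != 0, 0 <= a x / b x &
    forall y, P y -> a y - a x / b x * b y = 0 \/ 0 < a y * (a y - a x / b x * b y)].
Proof.
move=> Px0 bx0 ratio_x0.
pose root x := [&& P x, b x != 0 & 0 <= a x / b x].
have [x /and3P [Px bx ratio_x] min_x] :=
  @arg_minP _ _ _ x0 root (fun x => a x / b x) (introT and3P (And3 Px0 bx0 ratio_x0)).
exists x; split => // y Py.
have [->|cy_neq0] := eqVneq (a y - a x / b x * b y) 0; first by left.
right; rewrite ltNge; apply/negP => cross_y.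
have [by_neq0 ratio_y ratio_lt] := sign_change_root ratio_x cross_y cy_neq0.
have := min_x y; rewrite /root Py by_neq0 ratio_y => /(_ isT).
by rewrite leNgt ratio_lt.
Qed.

End Crossing.

Lemma sgn_sqr (R : realType) (e : bool) : sgn R e * sgn R e = 1.
Proof. by case: e; rewrite /sgn ?mulrNN mulr1. Qed.

Lemma sgn_negb (R : realType) (e : bool) : sgn R (~~ e) = - sgn R e.
Proof. by case: e; rewrite /sgn ?opprK. Qed.

Lemma exists_fresh (I : finType) m (i1 : I) (j : 'I_m -> I) : (m.+1 < #|I|)%N ->
  exists i, i != i1 /\ forall k, i != j k.
Proof.
move=> lt_mI; pose used := i1 |: [set j k | k : 'I_m].
have used_card : (#|used| <= m.+1)%N.
  rewrite cardsU1 -add1n leq_add ?leq_b1 //.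
  by rewrite (leq_trans (leq_imset_card _ _)) ?card_ord.
have : (0 < #|~: used|)%N by move: (cardsC used); lia.
case/card_gt0P => i; rewrite in_setC in_setU1 negb_or => /andP [i_neq_i1 i_notin].
exists i; split => // k; apply: contraNneq i_notin => ->.
by apply/imsetP; exists k.
Qed.

Lemma XatE (R : realType) n p (X : 'M[R]_(n, p)) i (lt_in : (i < n)%N) c :
  Xat X i c = X (Ordinal lt_in) c.
Proof.
rewrite /Xat; case: insubP => [i' _ i'E|]; last by rewrite lt_in.
by congr (X _ c); apply/val_inj.
Qed.

Lemma chainmx_sub (R : realType) n p (X : 'M[R]_(n, p)) o : (chainmx X o <= X)%MS.
Proof.
apply/row_subP => k.
have lt_kn : (k.+1 < n)%N by have := ltn_ord k; lia.
have lt_0n : (0 < n)%N by lia.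
have -> : row k (chainmx X o) = row (Ordinal lt_0n) X + sgn R (o k) *: row (Ordinal lt_kn) X.
  by apply/rowP => c; rewrite !mxE (XatE X lt_0n) (XatE X lt_kn).
by rewrite addmx_sub ?scalemx_sub ?row_sub.
Qed.

Section Regression.
Variables (R : realType) (n p : nat) (X : 'M[R]_(n, p)) (Y : 'cV[R]_n).

Definition resid (b : 'cV[R]_p) : 'cV[R]_n := Y - X *m b.

Lemma res2E b i : res2 X Y b i = resid b i 0 ^+ 2.
Proof. by []. Qed.

Lemma resid_line b d t : resid (b + t *: d) = resid b - t *: (X *m d).
Proof. by rewrite /resid mulmxDr -scalemxAr opprD addrA. Qed.

Variables (m : nat) (i1 : 'I_n) (j : 'I_m -> 'I_n) (o : 'I_m -> bool).
Local Notation A := (sysA X i1 j o).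

Definition gap (v : 'cV[R]_n) (i : 'I_n) (e : bool) : R := v i 0 - sgn R e * v i1 0.

Lemma gap_line v w t i e : gap (v - t *: w) i e = gap v i e - t * gap w i e.
Proof. by rewrite /gap !mxE; ring. Qed.

Lemma res2_sub_gap b i :
  res2 X Y b i - res2 X Y b i1 = gap (resid b) i true * gap (resid b) i false.
Proof. by rewrite !res2E /gap /sgn; ring. Qed.

Lemma sysA_mulE (b : 'cV[R]_p) k :
  (A *m b) k 0 = (X *m b) i1 0 + sgn R (o k) * (X *m b) (j k) 0.
Proof.
rewrite !mxE mulr_sumr -big_split /=; apply: eq_bigr => c _.
by rewrite !mxE mulrDl mulrA.
Qed.

Lemma res2_sys (b : 'cV[R]_p) k :
  A *m b = sysb Y i1 j o -> res2 X Y b (j k) = res2 X Y b i1.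
Proof.
have sqr_eq (y1 y2 u1 u2 s : R) : s * s = 1 -> u1 + s * u2 = y1 + s * y2 ->
    (y2 - u2) ^+ 2 = (y1 - u1) ^+ 2.
  move=> s2 e; have -> : y1 - u1 = s * (u2 - y2).
    by rewrite -[y1](addrK (s * y2)) -e; ring.
  by rewrite exprMn [s ^+ 2]expr2 s2 mul1r -sqrrN opprB.
move/matrixP/(_ k 0); rewrite sysA_mulE !mxE => sys_k.
by rewrite !res2E !mxE; apply: sqr_eq (sgn_sqr R (o k)) sys_k.
Qed.

Lemma sysArow_mulE (d : 'cV[R]_p) i e :
  (sysArow X i1 i e *m d) 0 0 = (X *m d) i1 0 + sgn R e * (X *m d) i 0.
Proof.
rewrite !mxE mulr_sumr -big_split /=; apply: eq_bigr => c _.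
by rewrite !mxE mulrDl mulrA.
Qed.

Lemma mxrank_sysA_extend (d : 'cV[R]_p) i e : A *m d = 0 -> gap (X *m d) i e != 0 ->
  \rank (col_mx A (sysArow X i1 i (~~ e))) = (\rank A).+1.
Proof.
move=> Ad0 gap_neq0; apply: mxrank_col_mx_kernel Ad0 _.
apply: contra gap_neq0 => /eqP/matrixP/(_ 0 0).
rewrite sysArow_mulE sgn_negb [RHS]mxE => row0.
have -> : gap (X *m d) i e = - sgn R e * ((X *m d) i1 0 + - sgn R e * (X *m d) i 0).
  by rewrite /gap; case: (e); rewrite /sgn; ring.
by rewrite row0 mulr0.
Qed.

Lemma row_gap_mulE (d : 'cV[R]_p) i e :
  ((row i X - sgn R e *: row i1 X) *m d) 0 0 = gap (X *m d) i e.
Proof. by rewrite mulmxBl -scalemxAl -!row_mul /gap !mxE. Qed.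

Definition fresh (i : 'I_n) : bool := (i != i1) && [forall k, i != j k].

Lemma freshP i : reflect (i != i1 /\ forall k, i != j k) (fresh i).
Proof. by apply: (iffP andP) => -[i_neq /forallP i_notj]. Qed.

Lemma not_fresh i : ~~ fresh i -> i = i1 \/ exists k, i = j k.
Proof.
rewrite negb_and negbK negb_forall => /orP [/eqP ->|/existsP [k]]; first by left.
by rewrite negbK => /eqP ->; right; exists k.
Qed.

Lemma res2_sys_not_fresh (b : 'cV[R]_p) i : A *m b = sysb Y i1 j o -> ~~ fresh i ->
  res2 X Y b i = res2 X Y b i1.
Proof.
by move=> sys_b /not_fresh [->|[k ->]] //; apply: res2_sys.
Qed.

Lemma X_sub_sysA : (exists i0, fresh i0) ->
  (forall i e, fresh i -> (row i X - sgn R e *: row i1 X <= A)%MS) -> (X <= A)%MS.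
Proof.
move=> [i0 fresh_i0] gap_rows_sub.
have row_i1_sub : (row i1 X <= A)%MS.
  have -> : row i1 X = 2^-1 *: ((row i0 X - sgn R false *: row i1 X) -
                                  (row i0 X - sgn R true *: row i1 X)).
    by apply/rowP => c; rewrite /sgn !mxE; field.
  apply/scalemx_sub/addmx_sub; first exact: gap_rows_sub.
  by rewrite -scaleN1r; apply/scalemx_sub/gap_rows_sub.
apply/row_subP => i; have [fresh_i|/not_fresh [->|[k ->]] //] := boolP (fresh i).
  rewrite -[row i X](subrK (row i1 X)) addmx_sub //.
  by have := gap_rows_sub i true fresh_i; rewrite /sgn scale1r.
have -> : row (j k) X = sgn R (o k) *: (row k A - row i1 X).
  apply/rowP => c; rewrite !mxE addrAC subrr add0r mulrA.
  by rewrite (sgn_sqr R (o k)) mul1r.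
apply/scalemx_sub/addmx_sub; first exact: row_sub.
by rewrite -scaleN1r; apply/scalemx_sub.
Qed.

Lemma exists_gap_direction o' :
  \rank (chainmx X o') = p -> (\rank A < p)%N -> (m.+1 < n)%N ->
  exists (i : 'I_n) (e : bool) (d : 'cV[R]_p),
    [/\ fresh i, A *m d = 0 & gap (X *m d) i e != 0].
Proof.
move=> rank_chain rankA_lt lt_mn.
have := exists_fresh i1 j; rewrite card_ord => /(_ lt_mn) [i0 [i0_neq_i1 i0_notj]].
apply: NNPP => no_direction.
have X_sub : (X <= A)%MS.
  apply: X_sub_sysA => [|i e fresh_i]; first by exists i0; apply/freshP.
  apply: contraT => /kernel_vector_notsub [d Ad0 gap_neq0]; exfalso; apply: no_direction.
  exists i, e, d; split => //; rewrite -row_gap_mulE.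
  apply: contraNneq gap_neq0 => gap0.
  by apply/eqP/matrixP => a b; rewrite !ord1 gap0 mxE.
have := mxrankS (submx_trans (chainmx_sub X o') X_sub).
by rewrite rank_chain leqNgt rankA_lt.
Qed.

Lemma gap_direction_orient (d : 'cV[R]_p) i e (v : R) :
  A *m d = 0 -> gap (X *m d) i e != 0 ->
  exists d' : 'cV[R]_p,
    [/\ A *m d' = 0, gap (X *m d') i e != 0 & 0 <= v / gap (X *m d') i e].
Proof.
move=> Ad0 gap_neq0; have [ratio_ge0|ratio_lt0] := leP 0 (v / gap (X *m d) i e).
  by exists d.
have gap_opp : gap (X *m - d) i e = - gap (X *m d) i e by rewrite /gap mulmxN !mxE; ring.
exists (- d); rewrite mulmxN Ad0 oppr0 gap_opp oppr_eq0 invrN mulrN oppr_ge0.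
by split => //; apply: ltW.
Qed.

Lemma tie_at_first_crossing h (b0 d : 'cV[R]_p) i0 e0 :
  (0 < h)%N -> (h < n)%N -> A *m b0 = sysb Y i1 j o ->
  res2 X Y b0 i1 = res2_ord X Y b0 h -> res2_ord X Y b0 h = res2_ord X Y b0 h.+1 ->
  A *m d = 0 -> fresh i0 -> gap (X *m d) i0 e0 != 0 ->
  0 <= gap (resid b0) i0 e0 / gap (X *m d) i0 e0 ->
  exists i e, [/\ fresh i, gap (X *m d) i e != 0 &
    exists beta1 : 'cV[R]_p,
      [/\ forall k, res2 X Y beta1 (j k) = res2 X Y beta1 i1,
          res2 X Y beta1 i = res2 X Y beta1 i1,
          res2 X Y beta1 i1 = res2_ord X Y beta1 h &
          res2_ord X Y beta1 h = res2_ord X Y beta1 h.+1]].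
Proof.
move=> h_gt0 lt_hn sys_b0 tie_h tie_h1 Ad0 fresh_i0 gap_i0 ratio_i0.
pose a (x : 'I_n * bool) := gap (resid b0) x.1 x.2.
pose b (x : 'I_n * bool) := gap (X *m d) x.1 x.2.
have [[i e] [/= fresh_i gap_i ratio_i crossing]] :=
  exists_first_crossing (P := fun x => fresh x.1) (a := a) (b := b) (x0 := (i0, e0))
    fresh_i0 gap_i0 ratio_i0.
set t := a (i, e) / b (i, e) in crossing.
pose beta1 := b0 + t *: d.
have sys_beta1 : A *m beta1 = sysb Y i1 j o.
  by rewrite mulmxDr -scalemxAr Ad0 scaler0 addr0.
have gap_beta1 i' e' : gap (resid beta1) i' e' = a (i', e') - t * b (i', e').
  by rewrite resid_line gap_line.
have sign_kept i' : fresh i' ->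
    (res2 X Y b0 i' - res2 X Y b0 i1 <= 0 -> res2 X Y beta1 i' - res2 X Y beta1 i1 <= 0) /\
    (0 <= res2 X Y b0 i' - res2 X Y b0 i1 -> 0 <= res2 X Y beta1 i' - res2 X Y beta1 i1).
  move=> fresh_i'; rewrite !res2_sub_gap !gap_beta1.
  exact: crossing_mul_sign (crossing (i', true) fresh_i') (crossing (i', false) fresh_i').
have le_kept i' :
    res2 X Y b0 i' <= res2 X Y b0 i1 -> res2 X Y beta1 i' <= res2 X Y beta1 i1.
  have [/sign_kept [le0 _]|/(res2_sys_not_fresh sys_beta1) -> //] := boolP (fresh i').
  by rewrite -subr_le0 => /le0; rewrite subr_le0.
have ge_kept i' :
    res2 X Y b0 i1 <= res2 X Y b0 i' -> res2 X Y beta1 i1 <= res2 X Y beta1 i'.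
  have [/sign_kept [_ ge0]|/(res2_sys_not_fresh sys_beta1) -> //] := boolP (fresh i').
  by rewrite -subr_ge0 => /ge0; rewrite subr_ge0.
have [tie1 tie2] : res2 X Y beta1 i1 = res2_ord X Y beta1 h /\
    res2_ord X Y beta1 h = res2_ord X Y beta1 h.+1.
  by apply: (order_stat_tie_transfer (f := res2 X Y b0)); rewrite ?card_ord.
exists i, e; split => //; exists beta1; split => //; first by move=> k; apply: res2_sys.
have root_i : a (i, e) - t * b (i, e) = 0 by rewrite /t divfK ?subrr.
apply/eqP; rewrite -subr_eq0 res2_sub_gap !gap_beta1.
by move: root_i; case: (e) => ->; rewrite ?mul0r ?mulr0.
Qed.

End Regression.

Theorem lemma5 (R : realType) (n p h : nat) (X : 'M[R]_(n, p)) (Y : 'cV[R]_n)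
  (hnp : (p < n)%N) (hp1 : (1 < p)%N) (hph : (p <= h)%N) (hhn : (h < n)%N)
  (hX : forall o : 'I_n.-1 -> bool, \rank (chainmx X o) = p)
  (l : nat) (hl2 : (2 <= l)%N) (hlp : (l <= p)%N)
  (i1 : 'I_n) (j : 'I_l.-1 -> 'I_n) (o : 'I_l.-1 -> bool)
  (hjinj : injective j) (hji1 : forall k, j k != i1)
  (hrank : \rank (sysA X i1 j o) = l.-1) :
  exists (j' : 'I_n) (o' : bool),
    [/\ j' != i1, (forall k, j' != j k),
        \rank (col_mx (sysA X i1 j o) (sysArow X i1 j' o')) = l &
        ((exists beta : 'cV[R]_p,
            [/\ sysA X i1 j o *m beta = sysb Y i1 j o,
                res2 X Y beta i1 = res2_ord X Y beta h &
                res2_ord X Y beta h = res2_ord X Y beta h.+1]) ->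
         exists beta1 : 'cV[R]_p,
           [/\ (forall k, res2 X Y beta1 (j k) = res2 X Y beta1 i1),
               res2 X Y beta1 j' = res2 X Y beta1 i1,
               res2 X Y beta1 i1 = res2_ord X Y beta1 h &
               res2_ord X Y beta1 h = res2_ord X Y beta1 h.+1])].
Proof.
have extend_rank i e (d : 'cV[R]_p) :
    sysA X i1 j o *m d = 0 -> gap i1 (X *m d) i e != 0 ->
    \rank (col_mx (sysA X i1 j o) (sysArow X i1 i (~~ e))) = l.
  by move=> Ad0 /(mxrank_sysA_extend Ad0) ->; rewrite hrank prednK // ltnW.
have rankA_lt : (\rank (sysA X i1 j o) < p)%N by rewrite hrank; lia.
have [i0 [e0 [d [fresh_i0 Ad0 gap_i0]]]] :=
  exists_gap_direction (hX (fun _ => true)) rankA_lt (ltac:(lia) : (l.-1.+1 < n)%N).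
case: (classic (exists beta : 'cV[R]_p, [/\ sysA X i1 j o *m beta = sysb Y i1 j o,
    res2 X Y beta i1 = res2_ord X Y beta h & res2_ord X Y beta h = res2_ord X Y beta h.+1]))
  => [[b0 [sys_b0 tie_h tie_h1]]|no_tie]; last first.
  have /freshP [i0_neq_i1 i0_notj] := fresh_i0.
  by exists i0, (~~ e0); split => //; apply: extend_rank Ad0 gap_i0.
have [d' [Ad'0 gap'_i0 ratio_i0]] :=
  gap_direction_orient (gap i1 (resid X Y b0) i0 e0) Ad0 gap_i0.
have [i [e [/freshP [i_neq_i1 i_notj] gap_i beta1_tie]]] :=
  tie_at_first_crossing (ltac:(lia) : (0 < h)%N) hhn sys_b0 tie_h tie_h1
    Ad'0 fresh_i0 gap'_i0 ratio_i0.
by exists i, (~~ e); split => //; apply: extend_rank Ad'0 gap_i.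
Qed.
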